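(* Let $n$ be a positive integer, $P = \mathrm{COR}(n)$ and $Q = Q(n)$. Then there exists a spectrahedron $S \subseteq \mathbb{R}^{n\times n}$ with $P \subseteq S \subseteq Q$ and $\operatorname{xc}_{SDP}(S) \leqslant n+1$.
   Context: $\mathrm{COR}(n) = \mathrm{conv}\{bb^\intercal \mid b\in\{0,1\}^n\}$ and $Q(n) = \{x\in\mathbb{R}^{n\times n}\mid \langle 2\,\mathrm{diag}(a)-aa^\intercal, x\rangle \leqslant 1\ \forall a\in\{0,1\}^n\}$, with $\langle\cdot,\cdot\rangle$ the Frobenius inner product. A semidefinite EF of a convex set $S\subseteq\mathbb{R}^d$ is a linear system $\langle E_i, x\rangle + \langle F_i, Y\rangle = g_i$ ($i\in[k]$), $Y \in \mathcal{S}^r_+$ (the cone of $r\times r$ symmetric positive semidefinite matrices), with $E_i\in\mathbb{R}^d$ and $F_i$ symmetric $r\times r$, such that $x\in S$ iff there exists $Y\in\mathcal{S}^r_+$ satisfying the system; its size is $r$. A spectrahedron is a convex set admitting a semidefinite EF, and $\operatorname{xc}_{SDP}(S)$ is the minimum size of a semidefinite EF of $S$. *)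

From HB Require Import structures.
From mathcomp Require Import all_boot all_order all_algebra.
From mathcomp Require Import reals.
Set Implicit Arguments. Unset Strict Implicit. Unset Printing Implicit Defensive.
Import Order.TTheory GRing.Theory Num.Theory.
Local Open Scope ring_scope.

Section Defs.
Variable R : realType.

Definition frob (m n : nat) (A X : 'M[R]_(m, n)) : R :=
  \sum_(i < m) \sum_(j < n) A i j * X i j.

Definition psd (r : nat) (Y : 'M[R]_r) : Prop :=
  Y^T = Y /\ forall v : 'cV[R]_r, 0 <= (v^T *m Y *m v) 0 0.

Definition conv (n : nat) (A : 'M[R]_n -> Prop) : 'M[R]_n -> Prop :=
  fun x => exists (m : nat) (p : 'I_m -> 'M[R]_n) (lam : 'I_m -> R),
    (forall i, A (p i)) /\ (forall i, 0 <= lam i) /\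
    \sum_(i < m) lam i = 1 /\ x = \sum_(i < m) lam i *: p i.

Definition bvec (n : nat) (b : 'I_n -> bool) : 'cV[R]_n :=
  \col_i (b i)%:R.

Definition COR (n : nat) : 'M[R]_n -> Prop :=
  conv (fun X => exists b : 'I_n -> bool, X = bvec b *m (bvec b)^T).

Definition Qset (n : nat) : 'M[R]_n -> Prop :=
  fun x => forall a : 'I_n -> bool,
    frob (2%:R *: diag_mx (bvec a)^T - bvec a *m (bvec a)^T) x <= 1.

Definition has_sdp_ef (n : nat) (S : 'M[R]_n -> Prop) (r : nat) : Prop :=
  exists (k : nat) (E : 'I_k -> 'M[R]_n) (F : 'I_k -> 'M[R]_r) (g : 'I_k -> R),
    (forall i, (F i)^T = F i) /\
    forall x : 'M[R]_n,
      S x <-> exists Y : 'M[R]_r, psd Y /\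
                forall i, frob (E i) x + frob (F i) Y = g i.

Definition spectrahedron (n : nat) (S : 'M[R]_n -> Prop) : Prop :=
  exists r, has_sdp_ef S r.

(* xc_SDP(S) <= t : the minimum size of a semidefinite EF of S is <= t,
   i.e. S has a semidefinite EF of some size r <= t *)
Definition xc_sdp_le (n : nat) (S : 'M[R]_n -> Prop) (t : nat) : Prop :=
  exists r, (r <= t)%N /\ has_sdp_ef S r.

End Defs.

(** Each vertex [b b^T] of the correlation polytope is the lower-right block
    of the rank-one PSD matrix [(1, b) (1, b)^T], whose border row and column
    are [diag (b b^T) = b].  So take [S] to be the set of [x] whose bordered
    matrix [border x = [[1, diag x^T]; [diag x, x]]] is PSD.  The bordering
    map is affine and PSD matrices form a convex cone, hence [COR(n) <= S].
    The quadratic form of [border x] at [(1, -a)] equals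
    [1 - <2 diag(a) - a a^T, x>], hence [S <= Q(n)].  Finally, the entries of
    [border x] being affine in [x], the linear equations [Y = border x] with
    [Y] PSD form a semidefinite extended formulation of size [n + 1]. *)
From mathcomp Require Import all_boot all_order all_algebra.
From mathcomp Require Import reals.
From mathcomp Require Import ring lra.
Set Implicit Arguments. Unset Strict Implicit. Unset Printing Implicit Defensive.
Import Order.TTheory GRing.Theory Num.Theory.
Local Open Scope ring_scope.

Section Frobenius.
Variables (R : realType) (m k : nat).
Implicit Types A B X : 'M[R]_(m, k).

Lemma frobDl A B X : frob (A + B) X = frob A X + frob B X.
Proof.
rewrite /frob -big_split; apply: eq_bigr => i _.
by rewrite -big_split; apply: eq_bigr => j _; rewrite mxE mulrDl.
Qed.

Lemma frobZl a A X : frob (a *: A) X = a * frob A X.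
Proof.
rewrite /frob mulr_sumr; apply: eq_bigr => i _.
by rewrite mulr_sumr; apply: eq_bigr => j _; rewrite mxE mulrA.
Qed.

Lemma frobNl A X : frob (- A) X = - frob A X.
Proof. by rewrite -scaleN1r frobZl mulN1r. Qed.

Lemma frobZr a A X : frob A (a *: X) = a * frob A X.
Proof.
rewrite /frob mulr_sumr; apply: eq_bigr => i _.
by rewrite mulr_sumr; apply: eq_bigr => j _; rewrite mxE mulrCA.
Qed.

Lemma frob_sumr l (X : 'I_l -> 'M[R]_(m, k)) A :
  frob A (\sum_(t < l) X t) = \sum_(t < l) frob A (X t).
Proof.
rewrite /frob [RHS]exchange_big; apply: eq_bigr => i _.
rewrite [RHS]exchange_big; apply: eq_bigr => j _.
by rewrite summxE mulr_sumr.
Qed.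

Lemma frob_delta (i : 'I_m) (j : 'I_k) X : frob (delta_mx i j) X = X i j.
Proof.
rewrite /frob (bigD1 i) //= [X in _ + X]big1 => [|i' /negbTE ne_i'i].
  rewrite addr0 (bigD1 j) //= big1 => [|j' /negbTE ne_j'j].
    by rewrite mxE !eqxx mul1r addr0.
  by rewrite mxE eqxx ne_j'j mul0r.
by apply: big1 => j' _; rewrite mxE ne_i'i mul0r.
Qed.

Lemma frob_outer (u : 'cV[R]_m) (w : 'cV[R]_k) X :
  frob (u *m w^T) X = \sum_i \sum_j u i 0 * w j 0 * X i j.
Proof.
by apply: eq_bigr => i _; apply: eq_bigr => j _; rewrite mxE big_ord1 !mxE.
Qed.

End Frobenius.

Section Quadratic.
Variables (R : realType) (r : nat).
Implicit Types (v w : 'cV[R]_r) (Y : 'M[R]_r).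

Lemma frob_diag (d : 'rV[R]_r) Y : frob (diag_mx d) Y = \sum_i d 0 i * Y i i.
Proof.
apply: eq_bigr => i _; rewrite (bigD1 i) //= big1 ?addr0.
  by rewrite mxE eqxx mulr1n.
by move=> j ne_ji; rewrite mxE eq_sym (negbTE ne_ji) mulr0n mul0r.
Qed.

Lemma quad_formE v Y : (v^T *m Y *m v) 0 0 = frob (v *m v^T) Y.
Proof.
rewrite frob_outer mxE exchange_big; apply: eq_bigr => j _.
rewrite mxE big_distrl; apply: eq_bigr => i _.
by rewrite !mxE mulrAC.
Qed.

Lemma psd_outer w : psd (w *m w^T).
Proof.
split=> [|v]; first by rewrite trmx_mul trmxK.
rewrite mulmxA -mulmxA -[w^T *m v]trmxK trmx_mul trmxK.
by rewrite mxE big_ord1 [X in _ * X]mxE -expr2 sqr_ge0.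
Qed.

Lemma psd_sym Y i j : psd Y -> Y j i = Y i j.
Proof. by case=> symY _; rewrite -[in RHS]symY mxE. Qed.

Lemma psd_conic l (lam : 'I_l -> R) (Y : 'I_l -> 'M[R]_r) :
  (forall t, 0 <= lam t) -> (forall t, psd (Y t)) ->
  psd (\sum_t lam t *: Y t).
Proof.
move=> lam_ge0 psdY; split=> [|v].
  apply/matrixP => i j; rewrite mxE !summxE; apply: eq_bigr => t _.
  by rewrite !mxE (psd_sym _ _ (psdY t)).
rewrite mulmx_sumr mulmx_suml summxE; apply: sumr_ge0 => t _.
by rewrite -scalemxAr -scalemxAl mxE mulr_ge0 //; case: (psdY t).
Qed.

End Quadratic.

Section AffinePreimage.
Variables (R : realType) (m r : nat) (M : 'M[R]_m -> 'M[R]_r).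
Variables (C : 'I_r -> 'I_r -> 'M[R]_m) (G : 'M[R]_r).
Hypothesis M_affine : forall x p q, M x p q = frob (C p q) x + G p q.

Lemma affine_comb l (lam : 'I_l -> R) (P : 'I_l -> 'M[R]_m) :
  \sum_t lam t = 1 -> M (\sum_t lam t *: P t) = \sum_t lam t *: M (P t).
Proof.
move=> sum_lam1; apply/matrixP => p q.
rewrite M_affine frob_sumr summxE -[G p q]mul1r -sum_lam1 big_distrl -big_split.
by apply: eq_bigr => t _; rewrite mxE M_affine frobZr mulrDr.
Qed.

Lemma conv_psd_affine (A : 'M[R]_m -> Prop) x :
  (forall y, A y -> psd (M y)) -> conv A x -> psd (M x).
Proof.
move=> psdA [l [P [lam [AP [lam_ge0 [sum_lam1 ->]]]]]].
by rewrite affine_comb //; apply: psd_conic => // t; apply: psdA.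
Qed.

(* Constraint [(p, q)] reads [Y p q - frob (C p q) x = G p q]; the symmetric
   matrix [(E_pq + E_qp) / 2] extracts [Y p q] because [Y] is symmetric. *)
Lemma has_sdp_ef_psd_affine : has_sdp_ef (fun x => psd (M x)) r.
Proof.
pose pq (t : 'I_#|{: 'I_r * 'I_r}|) : 'I_r * 'I_r := enum_val t.
pose F t : 'M[R]_r :=
  2^-1 *: (delta_mx (pq t).1 (pq t).2 + delta_mx (pq t).2 (pq t).1).
have frobF (Y : 'M[R]_r) t : psd Y -> frob (F t) Y = Y (pq t).1 (pq t).2.
  by move=> psdY; rewrite frobZl frobDl !frob_delta (psd_sym _ _ psdY); lra.
exists #|{: 'I_r * 'I_r}|, (fun t => - C (pq t).1 (pq t).2), F.
exists (fun t => G (pq t).1 (pq t).2); split.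
  move=> t; apply/matrixP => i j; rewrite !mxE addrC.
  by congr (_ * (_ + _)); rewrite andbC.
move=> x; split=> [psdMx | [Y [psdY eqY]]].
  by exists (M x); split=> // t; rewrite frobNl frobF // M_affine addKr.
suff -> : M x = Y by [].
apply/matrixP => p q; have := eqY (enum_rank (p, q)).
by rewrite frobNl frobF // /pq enum_rankK M_affine => <-; rewrite addNKr.
Qed.

End AffinePreimage.

Section Bordering.
Variables (R : realType) (n : nat).
Implicit Types (x : 'M[R]_n) (c : 'I_n -> R).

Definition border_coef (p q : 'I_n.+1) : 'M[R]_n :=
  match unlift ord0 p, unlift ord0 q with
  | Some i, Some j => delta_mx i j
  | Some i, None | None, Some i => delta_mx i i
  | None, None => 0
  end.

Definition border x : 'M[R]_n.+1 :=
  (\matrix_(p, q) frob (border_coef p q) x) + delta_mx ord0 ord0.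

Lemma borderE x p q :
  border x p q = frob (border_coef p q) x + delta_mx ord0 ord0 p q.
Proof. by rewrite !mxE. Qed.

Lemma border00 x : border x ord0 ord0 = 1.
Proof.
rewrite borderE /border_coef unlift_none /frob big1 ?add0r ?mxE //.
by move=> i _; rewrite big1 // => j _; rewrite mxE mul0r.
Qed.

Lemma border0l x j : border x ord0 (lift ord0 j) = x j j.
Proof.
by rewrite borderE /border_coef unlift_none liftK frob_delta mxE addr0.
Qed.

Lemma borderl0 x i : border x (lift ord0 i) ord0 = x i i.
Proof.
by rewrite borderE /border_coef unlift_none liftK frob_delta mxE addr0.
Qed.

Lemma borderll x i j : border x (lift ord0 i) (lift ord0 j) = x i j.
Proof. by rewrite borderE /border_coef !liftK frob_delta mxE addr0. Qed.

Definition cons_one c : 'cV[R]_n.+1 :=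
  \col_p if unlift ord0 p is Some i then c i else 1.

Lemma cons_one0 c : cons_one c ord0 0 = 1.
Proof. by rewrite mxE unlift_none. Qed.

Lemma cons_one_lift c i : cons_one c (lift ord0 i) 0 = c i.
Proof. by rewrite mxE liftK. Qed.

Lemma border_outer (b : 'I_n -> bool) :
  border (bvec R b *m (bvec R b)^T) =
  cons_one (fun i => (b i)%:R) *m (cons_one (fun i => (b i)%:R))^T.
Proof.
have bool_sq (c : bool) : c%:R * c%:R = c%:R :> R.
  by case: c; rewrite ?mul1r ?mul0r.
apply/matrixP => p q; rewrite [RHS]mxE big_ord1 [_^T _ _]mxE.
case: (unliftP ord0 p) => [i|] ->; case: (unliftP ord0 q) => [j|] ->;
  rewrite ?border00 ?border0l ?borderl0 ?borderll ?cons_one0 ?cons_one_lift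
          ?mul1r ?mulr1 //; rewrite mxE big_ord1 !mxE ?bool_sq //.
Qed.

Lemma quad_border x c :
  ((cons_one c)^T *m border x *m cons_one c) 0 0 =
  1 + 2 * (\sum_i c i * x i i) + \sum_i \sum_j c i * c j * x i j.
Proof.
have row_lift (i : 'I_n) :
    \sum_(q < n.+1) cons_one c (lift ord0 i) 0 * cons_one c q 0 *
                     border x (lift ord0 i) q
    = c i * x i i + \sum_j c i * c j * x i j.
  by rewrite big_ord_recl cons_one0 !cons_one_lift borderl0 mulr1;
    congr (_ + _); apply: eq_bigr => j _; rewrite cons_one_lift borderll.
rewrite quad_formE frob_outer big_ord_recl (eq_bigr _ (fun i _ => row_lift i)).
rewrite big_ord_recl cons_one0 border00 big_split /=.
under eq_bigr do rewrite cons_one_lift border0l mul1r.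
ring.
Qed.

Lemma COR_psd_border x : COR x -> psd (border x).
Proof.
apply: (@conv_psd_affine _ _ _ _ border_coef (delta_mx ord0 ord0)).
  exact: borderE.
by move=> _ [b ->]; rewrite border_outer; apply: psd_outer.
Qed.

Lemma psd_border_Q x : psd (border x) -> Qset x.
Proof.
case=> _ psd_quad a; have := psd_quad (cons_one (fun i => - (a i)%:R)).
rewrite quad_border frobDl frobNl frobZl frob_diag frob_outer.
have -> : \sum_i - (a i)%:R * x i i = - \sum_i (bvec R a)^T 0 i * x i i.
  by rewrite -sumrN; apply: eq_bigr => i _; rewrite !mxE mulNr.
have -> : \sum_i \sum_j - (a i)%:R * - (a j)%:R * x i j =
          \sum_i \sum_j bvec R a i 0 * bvec R a j 0 * x i j.
  by apply: eq_bigr => i _; apply: eq_bigr => j _; rewrite mulrNN !mxE.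
lra.
Qed.

End Bordering.

Theorem lemma9 (R : realType) (n : nat) (hn : (0 < n)%N) :
  exists S : 'M[R]_n -> Prop,
    (forall x, COR x -> S x) /\ (forall x, S x -> Qset x) /\
    spectrahedron S /\ xc_sdp_le S n.+1.
Proof.
have ef : has_sdp_ef (fun x => psd (@border R n x)) n.+1.
  exact: (has_sdp_ef_psd_affine (@borderE R n)).
exists (fun x => psd (border x)); split; first exact: COR_psd_border.
split; first exact: psd_border_Q.
by split; exists n.+1.
Qed.
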